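(* Let $\mathbf A=(\mathbf a_1,\ldots,\mathbf a_m)^\top\in\mathbb C^{m\times d}$ and $\mathbf b=(b_1,\ldots,b_m)^\top\in\mathbb C^m$. Then the following are equivalent: (A) $(\mathbf A,\mathbf b)$ is affine phase retrievable for $\mathbb C^d$. (B) The map $\mathbf M^2_{\mathbf A,\mathbf b}$ is injective on $\mathbb C^d$. (C) For any $\mathbf u,\mathbf v\in\mathbb C^d$ with $\mathbf u\neq0$, there exists $1\le k\le m$ such that $\mathrm{Re}\big(\langle\mathbf u,\mathbf a_k\rangle(\langle\mathbf a_k,\mathbf v\rangle+b_k)\big)\neq 0$. (D) Viewing $\mathbf M^2_{\mathbf A,\mathbf b}$ as a map $\mathbb R^{2d}\to\mathbb R^m$ (via $\mathbf x=\mathbf x_R+i\mathbf x_I\leftrightarrow(\mathbf x_R,\mathbf x_I)$), its real Jacobian $J(\mathbf x)$ has rank $2d$ for all $\mathbf x\in\mathbb R^{2d}$.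
   Context: For $\mathbf u,\mathbf v\in\mathbb C^d$, $\langle\mathbf u,\mathbf v\rangle=\sum_i\overline{u_i}v_i$. Define $\mathbf M_{\mathbf A,\mathbf b}(\mathbf x)=(|\langle\mathbf a_1,\mathbf x\rangle+b_1|,\ldots,|\langle\mathbf a_m,\mathbf x\rangle+b_m|)$ and $\mathbf M^2_{\mathbf A,\mathbf b}(\mathbf x)=(|\langle\mathbf a_1,\mathbf x\rangle+b_1|^2,\ldots,|\langle\mathbf a_m,\mathbf x\rangle+b_m|^2)$. $(\mathbf A,\mathbf b)$ is called affine phase retrievable for $\mathbb C^d$ if $\mathbf M_{\mathbf A,\mathbf b}$ is injective on $\mathbb C^d$. *)

From HB Require Import structures.
From mathcomp Require Import all_boot all_order all_algebra.
From mathcomp Require Import complex.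
From mathcomp Require Import all_classical all_reals all_analysis.
Set Implicit Arguments. Unset Strict Implicit. Unset Printing Implicit Defensive.
Import Order.TTheory GRing.Theory Num.Theory.
Import numFieldNormedType.Exports.
Local Open Scope ring_scope.
Local Open Scope complex_scope.

Section AffinePR.
Variable R : realType.
Local Notation C := (R[i]).

Definition cinner d (u v : 'cV[C]_d) : C := \sum_(i < d) (u i 0)^* * v i 0.

Definition arow m d (A : 'M[C]_(m, d)) (k : 'I_m) : 'cV[C]_d := (row k A)^T.

Definition affmeas m d (A : 'M[C]_(m, d)) (b : 'cV[C]_m) (x : 'cV[C]_d) (k : 'I_m) : C :=
  cinner (arow A k) x + b k 0.

Definition MAb m d (A : 'M[C]_(m, d)) (b : 'cV[C]_m) (x : 'cV[C]_d) : 'cV[C]_m :=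
  \col_k `|affmeas A b x k|.

Definition M2Ab m d (A : 'M[C]_(m, d)) (b : 'cV[C]_m) (x : 'cV[C]_d) : 'cV[C]_m :=
  \col_k (`|affmeas A b x k| ^+ 2).

Definition affine_phase_retrievable m d (A : 'M[C]_(m, d)) (b : 'cV[C]_m) : Prop :=
  injective (MAb A b).

Definition toCvec d (y : 'rV[R]_(d + d)) : 'cV[C]_d :=
  \col_i (y 0 (lshift d i) +i* y 0 (rshift d i)).

(* M^2_{A,b} viewed as a map R^{2d} -> R^m (its values are real) *)
Definition M2Ab_real m d (A : 'M[C]_(m, d)) (b : 'cV[C]_m) (y : 'rV[R]_(d + d)) : 'rV[R]_m :=
  \row_k complex.Re (M2Ab A b (toCvec y) k 0).

End AffinePR.

From HB Require Import structures.
From mathcomp Require Import all_boot all_order all_algebra.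
From mathcomp Require Import complex.
From mathcomp Require Import all_classical all_reals all_analysis.
From mathcomp Require Import ring.
Set Implicit Arguments. Unset Strict Implicit. Unset Printing Implicit Defensive.
Import Order.TTheory GRing.Theory Num.Theory.
Import numFieldNormedType.Exports.
Local Open Scope ring_scope.
Local Open Scope complex_scope.

(** Squaring is injective on nonnegative numbers, so [M] and [M^2] have the
    same fibres.  The polarization identity
    [|w + z|^2 - |w - z|^2 = 4 Re (z^* w)] with [w = <a_k, v> + b_k] and
    [z = <a_k, u>] shows that [M^2 (v + u) = M^2 (v - u)] iff
    [Re (<u, a_k> (<a_k, v> + b_k)) = 0] for all [k]; as every pair of distinct
    points is [v +- u] with [u <> 0], this is the equivalence of (B) and (C).
    Finally [h J(x)] is the row of the numbers
    [2 Re (<h, a_k> (<a_k, x> + b_k))], so [J(x)] has full row rank [2d]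
    exactly when (C) holds with [v = x]. *)

Lemma injective_symmetricP (F : numFieldType) (V : lmodType F) (T : Type)
    (f : V -> T) :
  injective f <-> forall v u : V, u != 0 -> f (v + u) <> f (v - u).
Proof.
split=> [injf v u u_neq0 /injf /addrI /eqP | fsep x y fxy].
  rewrite -subr_eq0 opprK -mulr2n -scaler_nat scaler_eq0.
  by rewrite pnatr_eq0 (negPf u_neq0).
have halfK (w : V) : 2^-1 *: (w *+ 2) = w.
  by rewrite -[w *+ 2]scaler_nat scalerA mulVf ?pnatr_eq0 // scale1r.
pose v := 2^-1 *: (x + y); pose u := 2^-1 *: (x - y).
have xE : x = v + u by rewrite -scalerDr addrACA subrr addr0 -mulr2n halfK.
have yE : y = v - u by rewrite -scalerBr opprB addrC addrA subrK -mulr2n halfK.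
have [/eqP|/(fsep v)] := eqVneq u 0; last by rewrite -xE -yE.
by rewrite scaler_eq0 invr_eq0 pnatr_eq0 subr_eq0 => /eqP.
Qed.

Section ComplexInner.
Variables (R : realType) (d : nat).
Local Notation C := R[i].

Lemma cinner_is_scalar (a : 'cV[C]_d) : scalar (cinner a).
Proof.
move=> c x y; rewrite /cinner mulr_sumr -big_split; apply: eq_bigr => i _.
by rewrite !mxE mulrDr mulrCA.
Qed.

HB.instance Definition _ (a : 'cV[C]_d) :=
  GRing.isLinear.Build C 'cV[C]_d C *%R (cinner a) (cinner_is_scalar a).

Lemma cinnerC (u v : 'cV[C]_d) : cinner u v = (cinner v u)^*.
Proof.
rewrite /cinner rmorph_sum; apply: eq_bigr => i _.
by rewrite rmorphM /= conjcK mulrC.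
Qed.

End ComplexInner.

Lemma subr_sqr_normcDB (R : rcfType) (w z : R[i]) :
  `|w + z| ^+ 2 - `|w - z| ^+ 2 = 4%:R * (complex.Re (z^* * w))%:C.
Proof.
rewrite -!add_Re2_Im2; case: w => a b; case: z => c e /=.
by apply/eqP; rewrite eq_complex /=; apply/andP; split; apply/eqP; ring.
Qed.

Section Measurements.
Variables (R : realType) (m d : nat) (A : 'M[R[i]]_(m, d)) (b : 'cV[R[i]]_m).

Lemma affmeasD v u k :
  affmeas A b (v + u) k = affmeas A b v k + cinner (arow A k) u.
Proof. by rewrite /affmeas raddfD addrAC. Qed.

Lemma affmeasB v u k :
  affmeas A b (v - u) k = affmeas A b v k - cinner (arow A k) u.
Proof. by rewrite /affmeas raddfB addrAC. Qed.

Lemma MAb_eq_M2Ab x y : MAb A b x = MAb A b y <-> M2Ab A b x = M2Ab A b y.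
Proof.
split=> /colP exy; apply/colP => k; move: (exy k); rewrite !mxE.
  by move->.
by move/eqP; rewrite eqrXn2 ?normr_ge0 // => /eqP.
Qed.

Lemma affine_phase_retrievable_M2Ab :
  affine_phase_retrievable A b <-> injective (M2Ab A b).
Proof. by split=> inj x y exy; apply: inj; apply/MAb_eq_M2Ab. Qed.

Lemma M2Ab_symmetricP v u :
  M2Ab A b (v + u) = M2Ab A b (v - u) <->
  forall k, complex.Re (cinner u (arow A k) * affmeas A b v k) = 0.
Proof.
have entryE k : (M2Ab A b (v + u) k 0 == M2Ab A b (v - u) k 0) =
                (complex.Re (cinner u (arow A k) * affmeas A b v k) == 0).
  rewrite !mxE affmeasD affmeasB -subr_eq0 subr_sqr_normcDB [cinner u _]cinnerC.
  by rewrite mulf_eq0 pnatr_eq0 /= eq_complex /= eqxx andbT.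
split=> [/colP exy k | e]; first by apply/eqP; rewrite -entryE exy.
by apply/colP => k; apply/eqP; rewrite entryE e.
Qed.

Lemma injective_M2AbP :
  injective (M2Ab A b) <->
  forall u v : 'cV[R[i]]_d, u != 0 -> exists k : 'I_m,
    complex.Re (cinner u (arow A k) * (cinner (arow A k) v + b k 0)) != 0.
Proof.
split=> [/injective_symmetricP sep u v u_neq0 | sep].
  apply: contrapT => nex; apply: (sep v u u_neq0); apply/M2Ab_symmetricP => k.
  by apply: contrapT => /eqP nz; apply: nex; exists k.
apply/injective_symmetricP => v u /(sep _ v)[k nz] /M2Ab_symmetricP e.
by move: nz; rewrite /affmeas in e; rewrite e eqxx.
Qed.

End Measurements.

Section LinearForm.
Variables (R : realType) (n : nat).

Definition lform (c y : 'rV[R]_n) : R := \sum_(j < n) c 0 j * y 0 j.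

Lemma lform_is_linear c : linear (lform c).
Proof.
move=> a y z; rewrite /lform scaler_sumr -big_split; apply: eq_bigr => j _.
by rewrite !mxE /= mulrDr mulrCA.
Qed.

HB.instance Definition _ c :=
  GRing.isLinear.Build R 'rV[R]_n R _ (lform c) (lform_is_linear c).

Lemma differentiable_lform c x : differentiable (lform c) x.
Proof.
have -> : lform c = \sum_(j < n) (c 0 j *: (fun y : 'rV[R]_n => y 0 j)).
  by apply/funext => y; rewrite /lform fct_sumE.
by apply: differentiable_sum => j; apply/differentiableZ/differentiable_coord.
Qed.

Lemma diff_lform c x : 'd (lform c) x = lform c :> (_ -> _).
Proof.
by apply: diff_lin => y; apply/differentiable_continuous/differentiable_lform.
Qed.

End LinearForm.

Section Derivatives.
Variable R : realType.

Lemma diff_add_sqr (V : normedModType R) (f g df dg : V -> R) x :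
  differentiable f x -> differentiable g x ->
  'd f x = df :> (V -> R) -> 'd g x = dg :> (V -> R) ->
  'd (f * f + g * g) x = (fun h => (f x * df h + g x * dg h) *+ 2) :> (V -> R).
Proof.
move=> dfx dgx edf edg.
rewrite (diffD (differentiableM dfx dfx) (differentiableM dgx dgx)).
rewrite (diffM dfx dfx) (diffM dgx dgx) edf edg.
by apply/funext => h; rewrite !fctE /= mulr2n [RHS]addrACA.
Qed.

Lemma mul_jacobian_row n m (G : 'I_m -> 'rV[R]_n -> R) x h :
  (forall k, differentiable (G k) x) ->
  h *m 'J (fun y => \row_k G k y) x = \row_k 'd (G k) x h.
Proof.
move=> dG; have drow : differentiable (fun y => \row_k G k y) x.
  have -> : (fun y => \row_k G k y) = \sum_(k < m) (fun y => G k y *: 'e_k).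
    apply/funext => y; rewrite fct_sumE [LHS]row_sum_delta.
    by apply: eq_bigr => k _; rewrite mxE.
  by apply: differentiable_sum => k; apply: differentiableZl.
rewrite -deriveEjacobian // derive_mx; last exact: diff_derivable.
apply/rowP => k; rewrite !mxE -deriveE //.
by congr (derive _ x h); apply/funext => y; rewrite mxE.
Qed.

End Derivatives.

Section Realification.
Variables (R : realType) (d : nat).
Local Notation C := R[i].

Definition realify (v : 'cV[C]_d) : 'rV[R]_(d + d) :=
  row_mx (\row_i complex.Re (v i 0)) (\row_i complex.Im (v i 0)).

Lemma realifyK : cancel realify (@toCvec R d).
Proof.
move=> v; apply/colP => i.
by rewrite mxE /realify row_mxEl row_mxEr !mxE; case: (v i 0).
Qed.

Lemma toCvecK : cancel (@toCvec R d) realify.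
Proof.
move=> y; apply/rowP => j.
by case: (split_ordP j) => i ->; rewrite /realify ?row_mxEl ?row_mxEr !mxE.
Qed.

Lemma toCvec_eq0 (y : 'rV[R]_(d + d)) : (toCvec y == 0) = (y == 0).
Proof.
have toCvec0 : toCvec (0 : 'rV[R]_(d + d)) = 0 by apply/colP => i; rewrite !mxE.
by rewrite -toCvec0 (can_eq toCvecK).
Qed.

Lemma realify_eq0 (u : 'cV[C]_d) : (realify u == 0) = (u == 0).
Proof. by rewrite -toCvec_eq0 realifyK. Qed.

Lemma Re_cinner_toCvec (a : 'cV[C]_d) (y : 'rV[R]_(d + d)) :
  complex.Re (cinner a (toCvec y)) = lform (realify a) y.
Proof.
rewrite /cinner /lform big_split_ord /= -big_split raddf_sum /=.
apply: eq_bigr => i _; rewrite row_mxEl row_mxEr !mxE.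
by case: (a i 0) => p q /=; ring.
Qed.

(* [Im z = Re ('i^* * z)]: the imaginary part is again a real linear form. *)
Lemma Im_cinner_toCvec (a : 'cV[C]_d) (y : 'rV[R]_(d + d)) :
  complex.Im (cinner a (toCvec y)) = lform (realify ('i *: a)) y.
Proof.
rewrite -Re_cinner_toCvec /cinner !raddf_sum; apply: eq_bigr => i _.
rewrite [('i *: a) i 0]mxE.
by case: (a i 0) (toCvec y i 0) => p q [r s] /=; ring.
Qed.

End Realification.

Section Jacobian.
Variables (R : realType) (m d : nat) (A : 'M[R[i]]_(m, d)) (b : 'cV[R[i]]_m).

Lemma mul_jacobian_M2Ab_real x h :
  h *m 'J (M2Ab_real A b) x =
  \row_k (2 * complex.Re (cinner (toCvec h) (arow A k) *
                          affmeas A b (toCvec x) k)).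
Proof.
pose re k := lform (realify (arow A k)) + cst (complex.Re (b k 0)).
pose im k := lform (realify ('i *: arow A k)) + cst (complex.Im (b k 0)).
have daffine c e : differentiable (lform c + cst e) x :=
  differentiableD (differentiable_lform c x) (differentiable_cst e x).
have diff_affine c e : 'd (lform c + cst e) x = lform c :> (_ -> R).
  rewrite (diffD (differentiable_lform c x) (differentiable_cst e x)).
  by rewrite diff_lform diff_cst; apply/funext => y /=; rewrite addr0.
have -> : M2Ab_real A b = fun y => \row_k ((re k * re k + im k * im k) y).
  apply/funext => y; apply/rowP => k; rewrite !mxE -add_Re2_Im2 /affmeas /=.
  by rewrite !raddfD /= Re_cinner_toCvec Im_cinner_toCvec !expr2.
rewrite mul_jacobian_row => [|k]; last first.
  by apply: differentiableD; apply: differentiableM; exact: daffine.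
apply/rowP => k; rewrite !mxE.
rewrite (diff_add_sqr (daffine _ _) (daffine _ _)
                      (diff_affine _ _) (diff_affine _ _)) /=.
rewrite !fctE -!Im_cinner_toCvec -!Re_cinner_toCvec.
rewrite [cinner (toCvec h) _]cinnerC.
rewrite /affmeas; case: (cinner (arow A k) (toCvec h)) => p q.
case: (cinner (arow A k) (toCvec x)) => r s.
by case: (b k 0) => t w /=; rewrite mulr2n; ring.
Qed.

Lemma row_free_jacobian_M2Ab_realP x :
  row_free ('J (M2Ab_real A b) x) <->
  forall u, u != 0 -> exists k : 'I_m,
    complex.Re (cinner u (arow A k) * affmeas A b (toCvec x) k) != 0.
Proof.
split=> [J_free u u_neq0 | sep].
  have : realify u *m 'J (M2Ab_real A b) x != 0.
    apply: contra u_neq0 => /eqP uJ0; rewrite -realify_eq0.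
    by apply/eqP/(row_free_inj J_free); rewrite uJ0 mul0mx.
  rewrite mul_jacobian_M2Ab_real realifyK => /rV0Pn[k].
  by rewrite mxE mulf_eq0 negb_or => /andP[_ nz]; exists k.
apply: inj_row_free => h hJ; apply/eqP; rewrite -toCvec_eq0.
apply: contraT => /sep[k].
move/rowP/(_ k): hJ; rewrite mul_jacobian_M2Ab_real !mxE => /eqP.
by rewrite mulf_eq0 pnatr_eq0 /= => /eqP ->; rewrite eqxx.
Qed.

Lemma full_rank_jacobian_M2AbP :
  (forall u v : 'cV[R[i]]_d, u != 0 -> exists k : 'I_m,
     complex.Re (cinner u (arow A k) * (cinner (arow A k) v + b k 0)) != 0) <->
  (forall x : 'rV[R]_(d + d), \rank ('J (M2Ab_real A b) x) = (d + d)%N).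
Proof.
split=> [sep x | full u v].
  by apply/eqP/row_free_jacobian_M2Ab_realP => u /sep; apply.
have : row_free ('J (M2Ab_real A b) (realify v)) by rewrite /row_free full.
by move/row_free_jacobian_M2Ab_realP; rewrite realifyK; apply.
Qed.

End Jacobian.

Theorem theorem3p1 (R : realType) (m d : nat)
    (A : 'M[R[i]]_(m, d)) (b : 'cV[R[i]]_m) :
  [<-> affine_phase_retrievable A b;
       injective (M2Ab A b);
       (forall u v : 'cV[R[i]]_d, u != 0 ->
          exists k : 'I_m,
            complex.Re (cinner u (arow A k) * (cinner (arow A k) v + b k 0)) != 0);
       (forall x : 'rV[R]_(d + d), \rank (derive.jacobian (M2Ab_real A b) x) = (d + d)%N)].
Proof.
have [AB BA] := affine_phase_retrievable_M2Ab A b.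
have [BC CB] := injective_M2AbP A b.
have [CD DC] := full_rank_jacobian_M2AbP A b.
by do !split=> //; move=> /DC /CB /BA.
Qed.
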